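(* Let $N\ge 1$ be an integer and let $P_N$ be the polynomial defined in the context. Then for every $t\in(0,\pi)$ with $t\neq \frac{2\pi}{N+2}$, $$ P_N(e^{it})=\frac{1}{2\bigl(\cos t-\cos\frac{2\pi}{N+2}\bigr)}+\frac{1-\cos\frac{2\pi}{N+2}}{(N+2)(1-\cos t)}\cdot\frac{\sin t\,\sin\frac{(N+2)t}{2}}{\bigl(\cos t-\cos\frac{2\pi}{N+2}\bigr)^2}\,e^{\frac{(N+2)}{2}it}. $$
   Context: For an integer $N\ge1$ put $b_0=1$ and, for $k=1,\dots,N$, $$b_k=\frac{(N-k+3)\sin\frac{(k+1)\pi}{N+2}-(N-k+1)\sin\frac{(k-1)\pi}{N+2}}{(N+2)\sin\frac{\pi}{N+2}}$$ (these are the cosine coefficients of the Egerváry–Szász polynomial $\frac{2}{N+2}\bigl|\sum_{k=0}^N\sin\frac{\pi(k+1)}{N+2}e^{ikt}\bigr|^2=\sum_{k=0}^N b_k\cos kt$). Define the polynomial $$P_N(z)=\frac{1}{\sin\frac{2\pi}{N+2}}\sum_{k=1}^N b_k\sin\frac{k\pi}{N+2}\,z^k,$$ which satisfies $P_N(0)=0$, $P_N'(0)=1$ (e.g. $P_1(z)=z$, $P_2(z)=z+\tfrac12z^2$, $P_3(z)=z+\tfrac{2}{\sqrt5}z^2+\tfrac12(1-\tfrac1{\sqrt5})z^3$, $P_4(z)=z+\tfrac76z^2+\tfrac23z^3+\tfrac16z^4$). *)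

From Stdlib Require Import Reals Lra Lia.
Open Scope R_scope.

Definition C : Type := (R * R)%type.
Definition Cadd (z w : C) : C := (fst z + fst w, snd z + snd w).
Definition Cmul (z w : C) : C :=
  (fst z * fst w - snd z * snd w, fst z * snd w + snd z * fst w).
Definition Cscale (r : R) (z : C) : C := (r * fst z, r * snd z).
Definition Cof (r : R) : C := (r, 0).
Fixpoint Cpow (z : C) (n : nat) : C :=
  match n with O => (1, 0) | S m => Cmul z (Cpow z m) end.
Definition Cexpi (t : R) : C := (cos t, sin t).

(* Csum f m n = f m + f (m+1) + ... + f (m+n-1)  (n terms) *)
Fixpoint Csum (f : nat -> C) (m n : nat) : C :=
  match n with O => (0, 0) | S n' => Cadd (f m) (Csum f (S m) n') end.

(* Cosine coefficients b_k of the Egervary--Szasz polynomial *)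
Definition b (N k : nat) : R :=
  match k with
  | O => 1
  | _ =>
    let M := INR N + 2 in
    ((INR N - INR k + 3) * sin ((INR k + 1) * PI / M)
     - (INR N - INR k + 1) * sin ((INR k - 1) * PI / M))
    / (M * sin (PI / M))
  end.

Definition P (N : nat) (z : C) : C :=
  Cscale (/ sin (2 * PI / (INR N + 2)))
    (Csum (fun k => Cscale (b N k * sin (INR k * PI / (INR N + 2))) (Cpow z k)) 1 N).

(* Write w = e^{i pi/(N+2)} and z = e^{it}.  By the product-to-sum formulas,
   b_k sin(k pi/(N+2)) / sin(2 pi/(N+2)) is a combination of w^{2k}, w^{-2k}
   and 1 whose coefficients are affine in k, so P_N(z) is the sum of three
   arithmetico-geometric series with ratios z w^2, z w^{-2} and z.  Summing
   them in closed form and using w^{N+2} = -1 and z^N = e^2 / z^2, where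
   e = e^{i(N+2)t/2}, leaves an identity between rational functions of w, z
   and e.  The hypotheses on t keep the three ratios away from 1. *)

From Stdlib Require Import Reals Lra Lia.
From Pilot Require Import Defs.
From Coquelicot Require Import Coquelicot.
Open Scope R_scope.

(* [Defs.C] is a copy of [R * R]; Coquelicot's [ring] and [field] only fire on
   equalities stated at its own type [C]. *)
Ltac as_complex_eq :=
  change Cadd with Cplus;
  match goal with |- @eq _ ?a ?b => change (@eq C a b) end.

Lemma Cadd_Cplus (z w : C) : Cadd z w = (z + w)%C.
Proof. reflexivity. Qed.

Lemma Cscale_Cmult (r : R) (z : C) : Cscale r z = (r * z)%C.
Proof. destruct z as [x y]; unfold Cscale, Cmult; simpl; f_equal; ring. Qed.

Lemma Cof_RtoC (r : R) : Cof r = RtoC r.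
Proof. reflexivity. Qed.

Lemma Cpow_Defs (z : C) (n : nat) : Defs.Cpow z n = (z ^ n)%C.
Proof. induction n as [|n IH]; simpl; [reflexivity|now rewrite IH]. Qed.

Lemma Csum_S_r (f : nat -> C) (m n : nat) :
  Csum f m (S n) = (Csum f m n + f (m + n)%nat)%C.
Proof.
  revert m; induction n as [|n IH]; intro m.
  - simpl; rewrite Nat.add_0_r; unfold Cadd, Cplus; simpl; f_equal; ring.
  - change (Csum f m (S (S n))) with (Cadd (f m) (Csum f (S m) (S n))).
    rewrite IH, Nat.add_succ_comm; simpl; unfold Cadd, Cplus; simpl; f_equal; ring.
Qed.

Lemma Csum_ext (f g : nat -> C) (m n : nat) :
  (forall k, (m <= k < m + n)%nat -> f k = g k) -> Csum f m n = Csum g m n.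
Proof.
  revert m; induction n as [|n IH]; intros m H; simpl; [reflexivity|].
  rewrite (H m) by lia; f_equal; apply IH; intros; apply H; lia.
Qed.

Lemma Csum_plus (f g : nat -> C) (m n : nat) :
  Csum (fun k => f k + g k)%C m n = (Csum f m n + Csum g m n)%C.
Proof.
  revert m; induction n as [|n IH]; intro m; simpl.
  - unfold Cplus; simpl; f_equal; ring.
  - rewrite IH; as_complex_eq; ring.
Qed.

Lemma Csum_Cmult_l (c : C) (f : nat -> C) (m n : nat) :
  Csum (fun k => c * f k)%C m n = (c * Csum f m n)%C.
Proof.
  revert m; induction n as [|n IH]; intro m; simpl.
  - unfold Cmult; simpl; f_equal; ring.
  - rewrite IH; as_complex_eq; ring.
Qed.

Definition arith_geom_sum (a d q : C) (n : nat) : C :=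
  (a * (q * (q ^ n - 1) / (q - 1))
   + d * (q * (1 - (INR n + 1) * q ^ n + INR n * q ^ n * q) / ((1 - q) * (1 - q))))%C.

Lemma Csum_arith_geom (a d q : C) (n : nat) : q <> RtoC 1 ->
  Csum (fun k => (a + d * INR k) * q ^ k)%C 1 n = arith_geom_sum a d q n.
Proof.
  intro Hq.
  assert (Hq1 : (q - 1)%C <> RtoC 0) by now apply Cminus_eq_contra.
  assert (H1q : (1 - q)%C <> RtoC 0) by now apply Cminus_eq_contra.
  unfold arith_geom_sum; induction n as [|n IH].
  - simpl; change (0, 0) with (RtoC 0); as_complex_eq; field; auto.
  - rewrite Csum_S_r, IH, Nat.add_1_l, !Cpow_S, S_INR, RtoC_plus; as_complex_eq; field; auto.
Qed.

Lemma Cexpi_add (x y : R) : Cexpi (x + y) = (Cexpi x * Cexpi y)%C.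
Proof. unfold Cexpi, Cmult; simpl; rewrite cos_plus, sin_plus; f_equal; ring. Qed.

Lemma Cexpi_0 : Cexpi 0 = RtoC 1.
Proof. unfold Cexpi; now rewrite cos_0, sin_0. Qed.

Lemma Cexpi_neq_0 (x : R) : Cexpi x <> RtoC 0.
Proof.
  unfold Cexpi; intro H; injection H as Hc Hs.
  pose proof (sin2_cos2 x) as H1; unfold Rsqr in H1; rewrite Hc, Hs in H1; lra.
Qed.

Lemma Cexpi_opp (x : R) : Cexpi (- x) = (/ Cexpi x)%C.
Proof.
  rewrite <- (Cmult_1_l (Cexpi (- x))), <- (Cinv_l (Cexpi x)) by apply Cexpi_neq_0.
  rewrite <- Cmult_assoc, <- Cexpi_add, Rplus_opp_r, Cexpi_0; apply Cmult_1_r.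
Qed.

Lemma Cexpi_INR_mult (k : nat) (x : R) : Cexpi (INR k * x) = (Cexpi x ^ k)%C.
Proof.
  induction k as [|k IH].
  - simpl; rewrite Rmult_0_l; apply Cexpi_0.
  - rewrite S_INR, Rmult_plus_distr_r, Rmult_1_l, Cexpi_add, IH, Cpow_S.
    apply Cmult_comm.
Qed.

Lemma Cexpi_add_PI (x : R) : Cexpi (x + PI) = (- Cexpi x)%C.
Proof. unfold Cexpi, Copp; now rewrite neg_cos, neg_sin. Qed.

Lemma Cexpi_neq_1 (x : R) : - PI < x < 2 * PI -> x <> 0 -> Cexpi x <> RtoC 1.
Proof.
  intros Hx Hx0 E; unfold Cexpi in E; injection E as Hc Hs.
  destruct (Rtotal_order x 0) as [Hneg|[Hzero|Hpos]]; [|contradiction|].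
  - pose proof (sin_lt_0_var x ltac:(lra) Hneg); lra.
  - destruct (Rtotal_order x PI) as [Hlt|[Heq|Hgt]].
    + pose proof (sin_gt_0 x Hpos Hlt); lra.
    + subst; rewrite cos_PI in Hc; lra.
    + pose proof (sin_lt_0 x Hgt ltac:(lra)); lra.
Qed.

Lemma Cexpi_PI_div_pow (n : nat) :
  let w := Cexpi (PI / (INR n + 2)) in (w ^ n)%C = (- / (w * w))%C.
Proof.
  intro w; unfold w; rewrite <- Cexpi_INR_mult.
  assert (HM : INR n + 2 <> 0) by (pose proof (pos_INR n); lra).
  replace (INR n * (PI / (INR n + 2)))
    with (- (PI / (INR n + 2) + PI / (INR n + 2)) + PI) by (field; auto).
  now rewrite Cexpi_add_PI, Cexpi_opp, Cexpi_add.
Qed.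

Lemma Cexpi_pow_half_angle (n : nat) (t : R) :
  let z := Cexpi t in let e := Cexpi ((INR n + 2) / 2 * t) in
  (z ^ n)%C = (e * e / (z * z))%C.
Proof.
  intros z e; unfold z, e.
  rewrite <- Cexpi_add, <- Cexpi_INR_mult.
  replace ((INR n + 2) / 2 * t + (INR n + 2) / 2 * t) with (INR n * t + t + t) by field.
  rewrite !Cexpi_add, Cexpi_INR_mult; assert (Hz := Cexpi_neq_0 t); field; auto.
Qed.

Lemma RtoC_cos (x : R) : RtoC (cos x) = ((Cexpi x + / Cexpi x) / 2)%C.
Proof.
  rewrite <- Cexpi_opp; unfold Cexpi; rewrite cos_neg, sin_neg.
  unfold Cdiv, Cplus, Cmult, Cinv, RtoC; simpl; f_equal; field.
Qed.

Lemma RtoC_sin (x : R) : RtoC (sin x) = ((Cexpi x - / Cexpi x) / (2 * Ci))%C.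
Proof.
  rewrite <- Cexpi_opp; unfold Cexpi; rewrite cos_neg, sin_neg.
  unfold Cdiv, Cminus, Cplus, Copp, Cmult, Cinv, RtoC, Ci; simpl; f_equal; field.
Qed.

Lemma Cexpi_sq_neq_1 (x : R) : sin x <> 0 -> (Cexpi x * Cexpi x)%C <> RtoC 1.
Proof.
  intros Hs E; apply Hs, RtoC_inj.
  assert (Hx := Cexpi_neq_0 x).
  assert (Hinv : (/ Cexpi x)%C = Cexpi x).
  { rewrite <- (Cmult_1_l (/ Cexpi x)), <- E; as_complex_eq; field; auto. }
  rewrite RtoC_sin, Hinv; as_complex_eq; field; apply Ci_nz.
Qed.

Lemma PI_div_bounds (N : nat) : (1 <= N)%nat ->
  3 <= INR N + 2 /\ 0 < PI / (INR N + 2) <= PI / 3.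
Proof.
  intro HN; assert (H1 : 1 <= INR N) by (apply (le_INR 1); lia).
  pose proof PI_RGT_0; split; [lra|split].
  - apply Rdiv_lt_0_compat; lra.
  - apply Rmult_le_compat_l; [lra|apply Rinv_le_contravar; lra].
Qed.

Lemma b_sin_expansion (N k : nat) : (1 <= N)%nat -> (1 <= k)%nat ->
  let M := INR N + 2 in let m := RtoC M in let w := Cexpi (PI / M) in
  RtoC (b N k * sin (INR k * PI / M) / sin (2 * PI / M)) =
  (((((m + 1) * w - (m - 1) / w) - (w - / w) * INR k) * (w * w) ^ k
   + (((m + 1) / w - (m - 1) * w) + (w - / w) * INR k) * (/ (w * w)) ^ k
   - 2 * (w + / w)) / (m * (w - / w) * (w * w - / (w * w))))%C.
Proof.
  intros HN Hk M m w.
  destruct (PI_div_bounds N HN) as [HM Hth]; fold M in HM, Hth.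
  set (th := PI / M) in *.
  destruct k as [|k]; [lia|].
  unfold b; cbv zeta; fold M.
  replace ((INR (S k) + 1) * PI / M) with (INR (S k) * th + th) by (unfold th; field; lra).
  replace ((INR (S k) - 1) * PI / M) with (INR (S k) * th + - th) by (unfold th; field; lra).
  replace (INR (S k) * PI / M) with (INR (S k) * th) by (unfold th; field; lra).
  replace (2 * PI / M) with (th + th) by (unfold th; field; lra).
  assert (Hs1 : sin th <> 0) by (apply Rgt_not_eq, sin_gt_0; lra).
  assert (Hs2 : sin (th + th) <> 0) by (apply Rgt_not_eq, sin_gt_0; lra).
  fold th; replace (INR N) with (M - 2) by (unfold M; ring).
  repeat first
    [ rewrite RtoC_div by (try (apply Rmult_integral_contrapositive; split); auto; lra)
    | rewrite RtoC_mult | rewrite RtoC_minus | rewrite RtoC_plus ].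
  rewrite !RtoC_sin, !Cexpi_add, !Cexpi_opp, !Cexpi_INR_mult; fold w.
  assert (Hw : w <> RtoC 0) by apply Cexpi_neq_0.
  rewrite !Cpow_inv, !Cpow_mult_l by (try apply Cmult_neq_0; auto).
  assert (Hwk : (w ^ S k)%C <> RtoC 0) by now apply Cpow_nz.
  assert (Hw2 := Cexpi_sq_neq_1 th Hs1).
  assert (Hw4 := Cexpi_sq_neq_1 (th + th) Hs2); rewrite Cexpi_add in Hw4; fold w in Hw2, Hw4.
  assert (Hm : RtoC M <> RtoC 0) by (intro E; apply RtoC_inj in E; lra).
  (* [field] treats let-bound variables as invalid atoms. *)
  unfold m; clearbody w th M; as_complex_eq; field.
  repeat split; cbv beta; auto using Cminus_eq_contra, Ci_nz.
Qed.

Lemma P_Csum (N : nat) (z : C) :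
  P N z = Csum (fun k =>
    RtoC (b N k * sin (INR k * PI / (INR N + 2)) / sin (2 * PI / (INR N + 2))) * z ^ k)%C 1 N.
Proof.
  unfold P; rewrite Cscale_Cmult, <- Csum_Cmult_l; apply Csum_ext; intros k _.
  rewrite Cscale_Cmult, Cpow_Defs, Cmult_assoc, <- RtoC_mult.
  do 2 f_equal; unfold Rdiv; ring.
Qed.

Lemma P_arith_geom (N : nat) (z : C) : (1 <= N)%nat ->
  let m := RtoC (INR N + 2) in let w := Cexpi (PI / (INR N + 2)) in
  (z * (w * w))%C <> RtoC 1 -> (z * / (w * w))%C <> RtoC 1 -> z <> RtoC 1 ->
  P N z =
  ((arith_geom_sum ((m + 1) * w - (m - 1) / w) (- (w - / w)) (z * (w * w)) N
    + arith_geom_sum ((m + 1) / w - (m - 1) * w) (w - / w) (z * / (w * w)) N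
    + arith_geom_sum (- 2 * (w + / w)) 0 z N)
   / (m * (w - / w) * (w * w - / (w * w))))%C.
Proof.
  intros HN m w Hq1 Hq2 Hz.
  rewrite P_Csum.
  rewrite (Csum_ext _ (fun k => / (m * (w - / w) * (w * w - / (w * w))) *
     ((((m + 1) * w - (m - 1) / w) + (- (w - / w)) * INR k) * (z * (w * w)) ^ k
      + (((m + 1) / w - (m - 1) * w) + (w - / w) * INR k) * (z * / (w * w)) ^ k
      + (- 2 * (w + / w) + 0 * INR k) * z ^ k))%C).
  2:{ intros k Hk; rewrite b_sin_expansion by lia; fold m w.
      rewrite !Cpow_mult_l; unfold m; clearbody w; as_complex_eq; unfold Cdiv; ring. }
  rewrite Csum_Cmult_l, !Csum_plus, !Csum_arith_geom by auto.
  unfold m; clearbody w; as_complex_eq; unfold Cdiv; ring.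
Qed.



Lemma RtoC_sin_mult_sin (x y : R) :
  RtoC (sin x * sin y) = (- ((Cexpi x - / Cexpi x) * (Cexpi y - / Cexpi y)) / 4)%C.
Proof.
  assert (Ci2 : (Ci * Ci)%C = (- 1)%C) by (unfold Ci, Cmult, Copp, RtoC; simpl; f_equal; ring).
  rewrite RtoC_mult, !RtoC_sin.
  set (X := (Cexpi x - / Cexpi x)%C); set (Y := (Cexpi y - / Cexpi y)%C).
  (* [Ci * Ci = -1] is not a field identity, so it is substituted by hand. *)
  replace (- (X * Y))%C with (X * Y / (Ci * Ci))%C
    by (rewrite Ci2; field; apply Cminus_eq_contra; intro E; apply RtoC_inj in E; lra).
  clearbody X Y; field; apply Ci_nz.
Qed.

Lemma Cexpi_closed_form_rhs (M t s a : R) :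
  M <> 0 -> cos t <> cos s -> cos t <> 1 ->
  Cadd (Cof (/ (2 * (cos t - cos s))))
       (Cscale ((1 - cos s) / (M * (1 - cos t))
                * (sin t * sin a / (cos t - cos s) ^ 2)) (Cexpi a)) =
  (let z := Cexpi t in let v := Cexpi s in let e := Cexpi a in
   let ct := ((z + / z) / 2)%C in let c := ((v + / v) / 2)%C in
   / (2 * (ct - c)) + (1 - c) / (M * (1 - ct))
     * (- ((z - / z) * (e - / e)) / 4 / (ct - c) ^ 2) * e)%C.
Proof.
  intros HM Hts Ht1.
  assert (Hts' : cos t - cos s <> 0) by lra.
  assert (Ht1' : 1 - cos t <> 0) by lra.
  rewrite Cadd_Cplus, Cof_RtoC, Cscale_Cmult.
  repeat first
    [ rewrite RtoC_sin_mult_sin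
    | rewrite RtoC_inv by (apply Rmult_integral_contrapositive; split; lra)
    | rewrite RtoC_div by (try apply pow_nonzero; try (apply Rmult_integral_contrapositive; split); lra)
    | rewrite RtoC_mult | rewrite RtoC_minus | rewrite RtoC_pow ].
  rewrite !RtoC_cos; reflexivity.
Qed.

Lemma arith_geom_closed_form (n : nat) (w z e : C) :
  let m := RtoC (INR n + 2) in
  w <> RtoC 0 -> z <> RtoC 0 -> e <> RtoC 0 -> (w * w * (w * w))%C <> RtoC 1 ->
  z <> RtoC 1 -> (z * (w * w))%C <> RtoC 1 -> (z * / (w * w))%C <> RtoC 1 ->
  (w ^ n)%C = (- / (w * w))%C -> (z ^ n)%C = (e * e / (z * z))%C ->
  let ct := ((z + / z) / 2)%C in let c := ((w * w + / (w * w)) / 2)%C in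
  ((arith_geom_sum ((m + 1) * w - (m - 1) / w) (- (w - / w)) (z * (w * w)) n
    + arith_geom_sum ((m + 1) / w - (m - 1) * w) (w - / w) (z * / (w * w)) n
    + arith_geom_sum (- 2 * (w + / w)) 0 z n)
   / (m * (w - / w) * (w * w - / (w * w))))%C =
  (/ (2 * (ct - c)) + (1 - c) / (m * (1 - ct))
      * (- ((z - / z) * (e - / e)) / 4 / (ct - c) ^ 2) * e)%C.
Proof.
  intros m Hw Hz He Hw4 Hz1 Hq1 Hq2 Hwn Hzn ct c.
  assert (Hww : (w * w)%C <> RtoC 0) by now apply Cmult_neq_0.
  assert (Hw2 : (w * w)%C <> RtoC 1) by (intro E; apply Hw4; rewrite E; as_complex_eq; ring).
  assert (Hzw : z <> (w * w)%C) by (intro E; apply Hq2; rewrite E; as_complex_eq; field; auto).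
  assert (Hm : m <> RtoC 0).
  { unfold m; intro E; apply RtoC_inj in E; pose proof (pos_INR n); lra. }
  assert (Hct : (ct - c)%C = ((z * (w * w) - 1) * (z - w * w) / (2 * z * (w * w)))%C)
    by (unfold ct, c; as_complex_eq; field; auto).
  assert (H1ct : (1 - ct)%C = (- ((z - 1) * (z - 1)) / (2 * z))%C)
    by (unfold ct; as_complex_eq; field; auto).
  rewrite Hct, H1ct; unfold arith_geom_sum.
  rewrite !Cpow_mult_l, !Cpow_inv, !Cpow_mult_l, !Hwn, !Hzn by auto.
  unfold m, c in *; clear ct c Hct H1ct; rewrite !RtoC_plus in *.
  field.
  repeat split; auto; apply Cminus_eq_contra; auto.
Qed.

Theorem theorem1 (N : nat) (t : R) :
  (1 <= N)%nat ->
  0 < t < PI ->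
  t <> 2 * PI / (INR N + 2) ->
  let c := cos (2 * PI / (INR N + 2)) in
  P N (Cexpi t) =
  Cadd (Cof (/ (2 * (cos t - c))))
       (Cscale ((1 - c) / ((INR N + 2) * (1 - cos t))
                * (sin t * sin ((INR N + 2) * t / 2) / (cos t - c) ^ 2))
               (Cexpi ((INR N + 2) / 2 * t))).
Proof.
  intros HN Ht Ht2 c; unfold c.
  destruct (PI_div_bounds N HN) as [HM Hth].
  set (th := PI / (INR N + 2)) in *.
  assert (H2th : 2 * PI / (INR N + 2) = th + th) by (unfold th; field; lra).
  rewrite H2th in Ht2 |- *.
  set (w := Cexpi th); set (z := Cexpi t).
  assert (Hww : Cexpi (th + th) = (w * w)%C) by apply Cexpi_add.
  assert (Hz1 : z <> RtoC 1) by (apply Cexpi_neq_1; lra).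
  assert (Hw4 : (w * w * (w * w))%C <> RtoC 1)
    by (rewrite <- Hww, <- Cexpi_add; apply Cexpi_neq_1; lra).
  assert (Hq1 : (z * (w * w))%C <> RtoC 1)
    by (unfold z; rewrite <- Hww, <- Cexpi_add; apply Cexpi_neq_1; lra).
  assert (Hq2 : (z * / (w * w))%C <> RtoC 1)
    by (unfold z; rewrite <- Hww, <- Cexpi_opp, <- Cexpi_add; apply Cexpi_neq_1; lra).
  assert (Hcos : cos t <> cos (th + th)) by (intro E; apply cos_inj in E; lra).
  assert (Hcos1 : cos t <> 1) by (rewrite <- cos_0; intro E; apply cos_inj in E; lra).
  rewrite P_arith_geom by auto.
  replace ((INR N + 2) * t / 2) with ((INR N + 2) / 2 * t) by field.
  rewrite Cexpi_closed_form_rhs by lra; cbv zeta; fold z; rewrite Hww.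
  apply arith_geom_closed_form; try apply Cexpi_neq_0; auto.
  - apply Cexpi_PI_div_pow.
  - apply Cexpi_pow_half_angle.
Qed.
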